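(* For every $k\ge1$ for which $\beta_0,\dots,\beta_k$ are defined, the greatest common divisor of $\beta_0,\beta_1,\dots,\beta_k$ is $\frac{1}{Q_k}$.
   Context: Setting: $k$ (the field) is algebraically closed of characteristic $0$; $\nu^*$ is a $k$-valuation of a function field $K^*$ of transcendence degree $2$ whose value group is a subgroup of $\mathbb{Q}$ and whose residue field $V^*/m_{V^*}$ is $k$; $S$ is an algebraic two-dimensional regular local ring with quotient field $K^*$ dominated by $V^*$, with regular parameters $(x,y)$, and $\nu^*$ is normalized so that $\nu^*(x)=1$. Jumping polynomials: $T_0=x$, $T_1=y$, $q_0=\infty$, $p_1,q_1$ coprime positive integers with $\nu^*(y)=p_1/q_1$; for $i\ge1$, $n_{i,j}$ ($0\le j<i$) are nonnegative integers with $n_{i,j}<q_j$ and $q_i\nu^*(T_i)=\sum_{j<i}n_{i,j}\nu^*(T_j)$, $\lambda_i\in k$ is the residue of $T_i^{q_i}/\prod_{j<i}T_j^{n_{i,j}}$, $T_{i+1}=T_i^{q_i}-\lambda_i\prod_{j<i}T_j^{n_{i,j}}$, and $p_{i+1},q_{i+1}$ are coprime positive integers with $\nu^*(T_{i+1})=q_i\nu^*(T_i)+\frac{1}{q_1\cdots q_i}\frac{p_{i+1}}{q_{i+1}}$. Put $\beta_i=\nu^*(T_i)$ and $Q_i=q_1\cdots q_i$. For rationals, $b$ $\mathbb{Z}$-divides $a$ if $a\in b\mathbb{Z}$; the greatest common divisor of finitely many rationals is the greatest rational $g$ that $\mathbb{Z}$-divides all of them. *)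

From HB Require Import structures.
From mathcomp Require Import all_boot all_order all_algebra.
Set Implicit Arguments. Unset Strict Implicit. Unset Printing Implicit Defensive.
Import Order.TTheory GRing.Theory Num.Theory.
Local Open Scope ring_scope.

Definition Zdvd (b a : rat) : Prop := exists z : int, a = z%:~R * b.

Definition gcdQ (s : seq rat) (g : rat) : Prop :=
  (forall a, a \in s -> Zdvd g a) /\
  (forall g', (forall a, a \in s -> Zdvd g' a) -> g' <= g).

(* nu : K -> Q (values on 0 irrelevant) is a valuation of K, trivial on the
   image of the ground field kF (a kF-valuation), with value group in Q. *)
Definition k_valuation (kF K : fieldType) (emb : {rmorphism kF -> K})
  (nu : K -> rat) : Prop :=
  [/\ forall a b : K, a != 0 -> b != 0 -> nu (a * b) = nu a + nu b,
      forall a b : K, a != 0 -> b != 0 -> a + b != 0 ->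
        Num.min (nu a) (nu b) <= nu (a + b)
    & forall c : kF, c != 0 -> nu (emb c) = 0 ].

Definition residue_of (kF K : fieldType) (emb : {rmorphism kF -> K})
  (nu : K -> rat) (a : K) (c : kF) : Prop :=
  a = emb c \/ (a - emb c != 0 /\ 0 < nu (a - emb c)).

Definition residue_field_is_k (kF K : fieldType) (emb : {rmorphism kF -> K})
  (nu : K -> rat) : Prop :=
  forall a : K, a != 0 -> 0 <= nu a -> exists c : kF, residue_of emb nu a c.

Definition Qprod (q : nat -> nat) (i : nat) : nat := \prod_(1 <= j < i.+1) q j.

Definition jumping_polys_upto (kF K : fieldType) (emb : {rmorphism kF -> K})
  (nu : K -> rat) (x y : K) (T : nat -> K) (p q : nat -> nat)
  (n : nat -> nat -> nat) (lam : nat -> kF) (m : nat) : Prop :=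
  [/\ T 0%N = x, T 1%N = y,
      [/\ (0 < p 1%N)%N, (0 < q 1%N)%N, coprime (p 1%N) (q 1%N)
        & nu y = (p 1%N)%:R / (q 1%N)%:R]
    & forall i, (1 <= i < m)%N ->
      [/\ forall j, (1 <= j < i)%N -> (n i j < q j)%N,
          (q i)%:R * nu (T i) = \sum_(j < i) (n i j)%:R * nu (T j),
          residue_of emb nu (T i ^+ q i / \prod_(j < i) T j ^+ n i j) (lam i),
          T i.+1 = T i ^+ q i - emb (lam i) * \prod_(j < i) T j ^+ n i j /\
          T i.+1 != 0 &
          [/\ (0 < p i.+1)%N, (0 < q i.+1)%N, coprime (p i.+1) (q i.+1)
            & nu (T i.+1) = (q i)%:R * nu (T i)
                + ((Qprod q i)%:R)^-1 * ((p i.+1)%:R / (q i.+1)%:R)]]].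

From HB Require Import structures.
From mathcomp Require Import all_boot all_order all_algebra.
From mathcomp Require Import ring.
Set Implicit Arguments.
Unset Strict Implicit.
Unset Printing Implicit Defensive.

Import Order.TTheory GRing.Theory Num.Theory.
Local Open Scope ring_scope.

(* The group generated by beta_0, ..., beta_i is (1/Q_i)Z. Indeed beta_0 = 1,
   and since beta_{i+1} = q_i beta_i + p_{i+1}/Q_{i+1} with 1/Q_i = q_{i+1}/Q_{i+1},
   adjoining beta_{i+1} to (1/Q_i)Z amounts to adjoining p_{i+1}/Q_{i+1}, which
   gives (1/Q_{i+1})Z because p_{i+1} and q_{i+1} are coprime. A positive
   generator of that group is the greatest rational Z-dividing all beta_j. *)

Lemma Zdvd_refl (g : rat) : Zdvd g g.
Proof. by exists 1; rewrite mul1r. Qed.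

Lemma Zdvd_add (g a b : rat) : Zdvd g a -> Zdvd g b -> Zdvd g (a + b).
Proof. by move=> [u ->] [v ->]; exists (u + v); rewrite intrD mulrDl. Qed.

Lemma Zdvd_zmul (g a : rat) (c : int) : Zdvd g a -> Zdvd g (c%:~R * a).
Proof. by move=> [u ->]; exists (c * u); rewrite intrM mulrA. Qed.

Lemma Zdvd_trans (g a b : rat) : Zdvd g a -> Zdvd a b -> Zdvd g b.
Proof. by move=> ga [c ->]; exact: Zdvd_zmul. Qed.

Lemma Zdvd_coprime (g a : rat) (p q : nat) : coprime p q ->
  Zdvd g (p%:R * a) -> Zdvd g (q%:R * a) -> Zdvd g a.
Proof.
move=> cpq gp gq; have /coprimezP [[u v] /= uv] : coprimez p q by [].
have -> : a = u%:~R * (p%:R * a) + v%:~R * (q%:R * a).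
  by rewrite !mulrA -mulrDl !pmulrn -!intrM -intrD uv mul1r.
by apply: Zdvd_add; apply: Zdvd_zmul.
Qed.

Lemma Zdvd_le (g a : rat) : 0 < a -> Zdvd g a -> g <= a.
Proof.
move=> a_gt0 [z a_eq]; have [g_le0 | g_gt0] := lerP g 0.
  exact: le_trans g_le0 (ltW a_gt0).
have z_gt0 : 0 < z by rewrite -(ltr0z rat) -(pmulr_lgt0 _ g_gt0) -a_eq.
by rewrite a_eq ler_peMl ?ler1z // ltW.
Qed.

(* Since finitely generated subgroups of Q are cyclic, this says that s
   generates the group gZ. *)
Definition generates_Zspan (s : seq rat) (g : rat) : Prop :=
  {in s, forall a, Zdvd g a} /\
  forall g', {in s, forall a, Zdvd g' a} -> Zdvd g' g.

Lemma generates_Zspan1 (a : rat) : generates_Zspan [:: a] a.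
Proof.
split=> [b | g' g'a]; first by rewrite inE => /eqP ->; exact: Zdvd_refl.
by apply: g'a; rewrite inE.
Qed.

Lemma generates_Zspan_rcons (s : seq rat) (b h : rat) (p q : nat) :
  coprime p q -> generates_Zspan s (q%:R * h) ->
  Zdvd (q%:R * h) (b - p%:R * h) -> generates_Zspan (rcons s b) h.
Proof.
move=> cpq [s_dvd s_gen] qh_b.
have h_qh : Zdvd h (q%:R * h) by exists q%:Z.
have h_ph : Zdvd h (p%:R * h) by exists p%:Z.
have b_eq : b = (b - p%:R * h) + p%:R * h by rewrite subrK.
split=> [a | g' g'_dvd].
  rewrite mem_rcons inE => /predU1P [-> | a_s].
    by rewrite b_eq; apply: Zdvd_add => //; exact: Zdvd_trans h_qh qh_b.
  exact: Zdvd_trans h_qh (s_dvd a a_s).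
have g'_qh : Zdvd g' (q%:R * h).
  by apply: s_gen => a a_s; apply: g'_dvd; rewrite mem_rcons inE a_s orbT.
apply: (Zdvd_coprime cpq _ g'_qh).
have -> : p%:R * h = b + (-1)%:~R * (b - p%:R * h) by ring.
apply: Zdvd_add; first by apply: g'_dvd; rewrite mem_rcons mem_head.
exact/Zdvd_zmul/(Zdvd_trans g'_qh).
Qed.

Lemma gcdQ_generates_Zspan (s : seq rat) (g : rat) :
  0 < g -> generates_Zspan s g -> gcdQ s g.
Proof.
by move=> g_gt0 [s_dvd s_gen]; split=> // g' /s_gen; exact: Zdvd_le.
Qed.

Lemma Qprod0 (q : nat -> nat) : Qprod q 0 = 1%N.
Proof. by rewrite /Qprod big_geq. Qed.

Lemma QprodS (q : nat -> nat) (i : nat) : Qprod q i.+1 = (Qprod q i * q i.+1)%N.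
Proof. by rewrite /Qprod big_nat_recr. Qed.

Lemma Qprod_gt0 (q : nat -> nat) (i : nat) :
  (forall j, (0 < j <= i)%N -> (0 < q j)%N) -> (0 < Qprod q i)%N.
Proof.
move=> q_gt0; rewrite /Qprod big_seq; apply: prodn_cond_gt0 => j.
by rewrite mem_index_iota ltnS; exact: q_gt0.
Qed.

Section ValueGroup.

Variables (b : nat -> rat) (p q : nat -> nat) (k : nat).
Hypothesis b0 : b 0%N = 1.
Hypothesis q_gt0 : forall i, (i < k)%N -> (0 < q i.+1)%N.
Hypothesis coprime_pq : forall i, (i < k)%N -> coprime (p i.+1) (q i.+1).
Hypothesis bS : forall i, (i < k)%N ->
  exists c : int, b i.+1 = c%:~R * b i + (p i.+1)%:R / (Qprod q i.+1)%:R.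

Lemma invQprodS (i : nat) : (i < k)%N ->
  (Qprod q i)%:R^-1 = (q i.+1)%:R * (Qprod q i.+1)%:R^-1 :> rat.
Proof.
move=> ik; rewrite QprodS natrM invfM mulrCA divff ?mulr1 //.
by rewrite pnatr_eq0 -lt0n q_gt0.
Qed.

Lemma generates_Zspan_values (i : nat) : (i <= k)%N ->
  generates_Zspan [seq b j | j <- iota 0 i.+1] (Qprod q i)%:R^-1.
Proof.
elim: i => [|i IH] ik; first by rewrite Qprod0 invr1 /= b0; exact: generates_Zspan1.
have [c bi1] := bS ik.
have [s_dvd _] := IH (ltnW ik).
rewrite -addn1 iotaD map_cat cats1 add0n.
apply: (generates_Zspan_rcons (p := p i.+1) (coprime_pq ik)); rewrite -invQprodS //.
  exact: IH (ltnW ik).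
have -> : b i.+1 - (p i.+1)%:R / (Qprod q i.+1)%:R = c%:~R * b i.
  by rewrite bi1 addrK.
by apply/Zdvd_zmul/s_dvd/map_f; rewrite mem_iota ltnS leqnn.
Qed.

End ValueGroup.

Lemma jumping_values_step (kF K : fieldType) (emb : {rmorphism kF -> K})
  (nu : K -> rat) (x y : K) (T : nat -> K) (p q : nat -> nat)
  (n : nat -> nat -> nat) (lam : nat -> kF) (k i : nat) :
  jumping_polys_upto emb nu x y T p q n lam k -> (i < k)%N ->
  [/\ (0 < q i.+1)%N, coprime (p i.+1) (q i.+1) &
      exists c : int,
        nu (T i.+1) = c%:~R * nu (T i) + (p i.+1)%:R / (Qprod q i.+1)%:R].
Proof.
case=> _ T1 [p1_gt0 q1_gt0 cp1 nuy] hstep; case: i => [|i] ik.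
  by split=> //; exists 0; rewrite mul0r add0r T1 nuy QprodS Qprod0 mul1n.
have /hstep [_ _ _ _ [_ q_gt0 cpq ->]] : (1 <= i.+1 < k)%N by [].
split=> //; exists (q i.+1)%:Z.
by rewrite (QprodS q i.+1) natrM invfM pmulrn; ring.
Qed.

Theorem proposition5p3
  (kF : closedFieldType) (char0 : [pchar kF] =i pred0)
  (K : fieldType) (emb : {rmorphism kF -> K}) (nu : K -> rat)
  (hval : k_valuation emb nu) (hres : residue_field_is_k emb nu)
  (x y : K) (hx : x != 0) (hy : y != 0)
  (hnux : nu x = 1) (hnuy : 0 < nu y)
  (T : nat -> K) (p q : nat -> nat) (n : nat -> nat -> nat) (lam : nat -> kF)
  (k : nat) (hk : (1 <= k)%N)
  (hT : jumping_polys_upto emb nu x y T p q n lam k) :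
  gcdQ [seq nu (T i) | i <- iota 0 k.+1] ((Qprod q k)%:R)^-1.
Proof.
have step i (ik : (i < k)%N) := jumping_values_step hT ik.
have q_gt0 i (ik : (i < k)%N) : (0 < q i.+1)%N by case: (step i ik).
have Qk_gt0 : (0 < Qprod q k)%N.
  by apply: Qprod_gt0 => -[|j] // /andP[_ jk]; exact: q_gt0.
apply: gcdQ_generates_Zspan; first by rewrite invr_gt0 ltr0n.
apply: (generates_Zspan_values (p := p) (k := k)) => //.
- by case: hT => -> _ _ _.
- by move=> i /step[].
- by move=> i /step[].
Qed.
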